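(* (1) Let $(A,\cdot,[-,-])$ be a transposed Poisson algebra and $\mathcal{B}$ a nondegenerate skew-symmetric bilinear form on $A$ that is a Connes cocycle on $(A,\cdot)$ and a symplectic form on $(A,[-,-])$. Define $\star,\circ$ by $\mathcal{B}(x\star y,z)=\mathcal{B}(y,x\cdot z)$ and $\mathcal{B}(x\circ y,z)=-\mathcal{B}(y,[x,z])$. Then $(A,\star,\circ)$ is a TZPD algebra with $x\star y+y\star x=x\cdot y$ and $x\circ y-y\circ x=[x,y]$. (2) Conversely, let $(A,\star,\circ)$ be a TZPD algebra, $x\cdot y=x\star y+y\star x$, $[x,y]=x\circ y-y\circ x$. Then $A\ltimes_{-\mathcal{L}^*_{\star},\mathcal{L}^*_{\circ}}A^*$ is a transposed Poisson algebra, and $\mathcal{B}_p$ is a Connes cocycle on its commutative associative product and a symplectic form on its Lie bracket.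
   Context: Finite-dimensional spaces, characteristic zero. $\mathcal{L}_\ast(x)y=x\ast y$; $\langle\rho^*(x)v^*,u\rangle=-\langle v^*,\rho(x)u\rangle$. For $(A,\cdot,[-,-])$ and linear $\mu,\rho:A\to\mathrm{End}(V)$, $A\ltimes_{\mu,\rho}V$ is $A\oplus V$ with $(x,u)\cdot(y,v)=(x\cdot y,\mu(x)v+\mu(y)u)$, $[(x,u),(y,v)]=([x,y],\rho(x)v-\rho(y)u)$. $\mathcal{B}_p((x,a^* ),(y,b^* ))=\langle x,b^*\rangle-\langle a^*,y\rangle$. Connes cocycle on $(A,\cdot)$: skew-symmetric $\mathcal{B}$ with $\mathcal{B}(x\cdot y,z)+\mathcal{B}(y\cdot z,x)+\mathcal{B}(z\cdot x,y)=0$; symplectic form on a Lie algebra: nondegenerate skew-symmetric $\mathcal{B}$ with $\mathcal{B}([x,y],z)+\mathcal{B}([y,z],x)+\mathcal{B}([z,x],y)=0$. Transposed Poisson algebra: $(A,\cdot)$ commutative associative, $(A,[-,-])$ Lie, $2z\cdot[x,y]=[z\cdot x,y]+[x,z\cdot y]$. Zinbiel: $x\star(y\star z)=(x\star y)\star z+(y\star x)\star z$. Pre-Lie: $(x\circ y)\circ z-x\circ(y\circ z)=(y\circ x)\circ z-y\circ(x\circ z)$. A TZPD algebra is $(A,\star,\circ)$ with $(A,\star)$ Zinbiel, $(A,\circ)$ pre-Lie, and for all $x,y,z$: $2y\circ(x\star z)=(x\star y+y\star x)\circ z+x\star(y\circ z)$; $2(x\circ y-y\circ x)\star z=x\star(y\circ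 z)-y\star(x\circ z)$; $y\circ(x\star z+z\star x)-x\circ(y\star z+z\star y)+z\star(x\circ y-y\circ x)=0$. *)

From HB Require Import structures.
From mathcomp Require Import all_boot all_order all_algebra.
Set Implicit Arguments. Unset Strict Implicit. Unset Printing Implicit Defensive.
Import GRing.Theory.
Local Open Scope ring_scope.

(* Conventions: K is a field (char 0 assumed in the theorem), the
   finite-dimensional space A is K^n = 'rV[K]_n, its dual A^* is also
   'rV[K]_n with the canonical pairing <a, u> = \sum_i a_i u_i. *)

Section Defs.
Variable K : fieldType.

Section Generic.
Variable V : lmodType K.

Definition bilin_op (m : V -> V -> V) : Prop :=
  (forall (a : K) x y z, m (a *: x + y) z = a *: m x z + m y z) /\
  (forall (a : K) x y z, m z (a *: x + y) = a *: m z x + m z y).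

Definition bilin_form (B : V -> V -> K) : Prop :=
  (forall (a : K) x y z, B (a *: x + y) z = a * B x z + B y z) /\
  (forall (a : K) x y z, B z (a *: x + y) = a * B z x + B z y).

Definition skew_form (B : V -> V -> K) : Prop :=
  forall x y, B x y = - B y x.

Definition nondeg_form (B : V -> V -> K) : Prop :=
  forall x, (forall y, B x y = 0) -> x = 0.

Definition connes_cocycle (dot : V -> V -> V) (B : V -> V -> K) : Prop :=
  bilin_form B /\ skew_form B /\
  forall x y z, B (dot x y) z + B (dot y z) x + B (dot z x) y = 0.

Definition symplectic_form (br : V -> V -> V) (B : V -> V -> K) : Prop :=
  bilin_form B /\ nondeg_form B /\ skew_form B /\
  forall x y z, B (br x y) z + B (br y z) x + B (br z x) y = 0.

Definition comm_assoc_alg (dot : V -> V -> V) : Prop :=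
  bilin_op dot /\ (forall x y, dot x y = dot y x) /\
  (forall x y z, dot (dot x y) z = dot x (dot y z)).

Definition lie_alg (br : V -> V -> V) : Prop :=
  bilin_op br /\ (forall x, br x x = 0) /\
  (forall x y z, br x (br y z) + br y (br z x) + br z (br x y) = 0).

Definition transposed_poisson (dot br : V -> V -> V) : Prop :=
  comm_assoc_alg dot /\ lie_alg br /\
  forall x y z, dot z (br x y) *+ 2 = br (dot z x) y + br x (dot z y).

Definition zinbiel (star : V -> V -> V) : Prop :=
  bilin_op star /\
  forall x y z, star x (star y z) = star (star x y) z + star (star y x) z.

Definition pre_lie (circ : V -> V -> V) : Prop :=
  bilin_op circ /\
  forall x y z, circ (circ x y) z - circ x (circ y z)
              = circ (circ y x) z - circ y (circ x z).

Definition TZPD (star circ : V -> V -> V) : Prop :=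
  zinbiel star /\ pre_lie circ /\
  (forall x y z, circ y (star x z) *+ 2
                 = circ (star x y + star y x) z + star x (circ y z)) /\
  (forall x y z, star (circ x y - circ y x) z *+ 2
                 = star x (circ y z) - star y (circ x z)) /\
  (forall x y z, circ y (star x z + star z x) - circ x (star y z + star z y)
                 + star z (circ x y - circ y x) = 0).
End Generic.

Section Coord.
Variable n : nat.

Definition pairing (a u : 'rV[K]_n) : K := \sum_(i < n) a 0 i * u 0 i.

(* dual representation rho' with <rho'(x) a, u> = - <a, rho(x) u> *)
Definition dual_rep (rho : 'rV[K]_n -> 'rV[K]_n -> 'rV[K]_n)
  : 'rV[K]_n -> 'rV[K]_n -> 'rV[K]_n :=
  fun x a => \row_j (- pairing a (rho x (delta_mx 0 j))).

Definition sd_prod_mul (dot : 'rV[K]_n -> 'rV[K]_n -> 'rV[K]_n)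
  (mu : 'rV[K]_n -> 'rV[K]_n -> 'rV[K]_n) :
  'rV[K]_n * 'rV[K]_n -> 'rV[K]_n * 'rV[K]_n -> 'rV[K]_n * 'rV[K]_n :=
  fun p q => (dot p.1 q.1, mu p.1 q.2 + mu q.1 p.2).

Definition sd_prod_br (br : 'rV[K]_n -> 'rV[K]_n -> 'rV[K]_n)
  (rho : 'rV[K]_n -> 'rV[K]_n -> 'rV[K]_n) :
  'rV[K]_n * 'rV[K]_n -> 'rV[K]_n * 'rV[K]_n -> 'rV[K]_n * 'rV[K]_n :=
  fun p q => (br p.1 q.1, rho p.1 q.2 - rho q.1 p.2).

Definition Bp (p q : 'rV[K]_n * 'rV[K]_n) : K :=
  pairing q.2 p.1 - pairing p.2 q.1.
End Coord.
End Defs.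

From mathcomp Require Import all_boot all_order all_algebra.
From mathcomp Require Import ring.
Set Implicit Arguments. Unset Strict Implicit. Unset Printing Implicit Defensive.
Import GRing.Theory.
Local Open Scope ring_scope.

(* Through B, the left multiplications of the new products are
   B-adjoints: L_star x is the adjoint of L_dot x, and L_circ x is minus the
   adjoint of ad x.  The Connes and symplectic conditions say that these
   adjoints symmetrize back to the product and antisymmetrize back to the
   bracket, and the first two TZPD axioms are adjoints of instances of the
   transposed Poisson identity.  The third axiom is not of this operator form:
   its pairing f(x,y,z,w) with a fourth vector is shown, using both cocycle
   conditions and the transposed Poisson identity, to equal -2 f, so that
   3 f = 0 in characteristic zero.

   The commutative associative and Lie algebras sub-adjacent to the
   Zinbiel and pre-Lie structures form a transposed Poisson algebra, and
   -L*_star, L*_circ are representations of them satisfying the two mixed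
   conditions that make the semidirect product transposed Poisson; dualizing
   through the pairing turns these conditions into the Zinbiel and pre-Lie
   identities and the first two TZPD axioms.  The properties of B_p are
   direct computations in which the dual actions cancel. *)

Lemma subr_swap (V : zmodType) (a b c d : V) : a - b - (c - d) = a - c - (b - d).
Proof. by rewrite !opprB addrACA [RHS]addrACA (addrC (- b)). Qed.

Lemma addr_subC (V : zmodType) (a b c d : V) : a - b + (c - d) = a - d + (c - b).
Proof. by rewrite addrACA [RHS]addrACA (addrC (- b)). Qed.

Lemma addrBBB (V : zmodType) (a b c a' b' c' : V) :
  (a - a') + (b - b') + (c - c') = (a + b + c) - (a' + b' + c').
Proof. by rewrite (addrACA a) (addrACA (a + b)) !opprD. Qed.

Section Bilinear.
Variables (K : fieldType) (V W : lmodType K).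

Definition bilinear_map (m : V -> V -> W) : Prop :=
  (forall (a : K) x y z, m (a *: x + y) z = a *: m x z + m y z) /\
  (forall (a : K) x y z, m z (a *: x + y) = a *: m z x + m z y).

Variables (m : V -> V -> W) (hm : bilinear_map m).

Lemma bilinDl x y z : m (x + y) z = m x z + m y z.
Proof. by have := hm.1 1 x y z; rewrite !scale1r. Qed.

Lemma bilinDr x y z : m z (x + y) = m z x + m z y.
Proof. by have := hm.2 1 x y z; rewrite !scale1r. Qed.

Lemma bilin0l z : m 0 z = 0.
Proof. by apply: (addrI (m 0 z)); rewrite -bilinDl !addr0. Qed.

Lemma bilin0r z : m z 0 = 0.
Proof. by apply: (addrI (m z 0)); rewrite -bilinDr !addr0. Qed.

Lemma bilinZl a x z : m (a *: x) z = a *: m x z.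
Proof. by have := hm.1 a x 0 z; rewrite !addr0 bilin0l addr0. Qed.

Lemma bilinZr a x z : m z (a *: x) = a *: m z x.
Proof. by have := hm.2 a x 0 z; rewrite !addr0 bilin0r addr0. Qed.

Lemma bilinNl x z : m (- x) z = - m x z.
Proof. by rewrite -scaleN1r bilinZl scaleN1r. Qed.

Lemma bilinNr x z : m z (- x) = - m z x.
Proof. by rewrite -scaleN1r bilinZr scaleN1r. Qed.

Lemma bilinBl x y z : m (x - y) z = m x z - m y z.
Proof. by rewrite bilinDl bilinNl. Qed.

Lemma bilinBr x y z : m z (x - y) = m z x - m z y.
Proof. by rewrite bilinDr bilinNr. Qed.

Lemma bilinMnl x z k : m (x *+ k) z = m x z *+ k.
Proof. by elim: k => [|k IHk]; rewrite ?bilin0l // !mulrS bilinDl IHk. Qed.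

Lemma bilinMnr x z k : m z (x *+ k) = m z x *+ k.
Proof. by elim: k => [|k IHk]; rewrite ?bilin0r // !mulrS bilinDr IHk. Qed.
End Bilinear.

Lemma bilin_form_map (K : fieldType) (V : lmodType K) (B : V -> V -> K) :
  bilin_form B -> bilinear_map (B : V -> V -> K^o).
Proof. by []. Qed.

Lemma bilin_formZl (K : fieldType) (V : lmodType K) (B : V -> V -> K) :
  bilin_form B -> forall a x z, B (a *: x) z = a * B x z.
Proof. by move=> hB; exact: bilinZl (bilin_form_map hB). Qed.

Lemma bilin_formZr (K : fieldType) (V : lmodType K) (B : V -> V -> K) :
  bilin_form B -> forall a x z, B z (a *: x) = a * B z x.
Proof. by move=> hB; exact: bilinZr (bilin_form_map hB). Qed.

Lemma bilin_opN (K : fieldType) (V : lmodType K) (m : V -> V -> V) :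
  bilin_op m -> bilin_op (fun x y => - m x y).
Proof.
move=> hm; split=> a x y z;
  by rewrite ?(bilinDl hm, bilinDr hm, bilinZl hm, bilinZr hm) opprD scalerN.
Qed.

Section LieTransposedPoisson.
Variables (K : fieldType) (V : lmodType K) (dot br : V -> V -> V).

Lemma lie_alg_anticomm : lie_alg br -> forall x y, br x y = - br y x.
Proof.
move=> [hb [br_xx _]] x y; apply/eqP; rewrite -addr_eq0 -(br_xx (x + y)).
by rewrite (bilinDl hb) !(bilinDr hb) !br_xx add0r addr0.
Qed.

Lemma lie_alg_leibniz :
  lie_alg br -> forall x y z, br (br x y) z = br x (br y z) - br y (br x z).
Proof.
move=> hlie x y z; have [hb [_ jacobi]] := hlie; have brC := lie_alg_anticomm hlie.
rewrite (brC _ z) (addr0_eq (etrans (addrC _ _) (jacobi x y z))).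
by rewrite (brC z x) (bilinNr hb).
Qed.

Lemma transposed_poisson_cyclic : [pchar K] =i pred0 ->
  transposed_poisson dot br ->
  forall x y z, dot x (br y z) + dot y (br z x) + dot z (br x y) = 0.
Proof.
move=> hchar [[_ [dotC _]] [hlie tp]] x y z; have brC := lie_alg_anticomm hlie.
have two_neq0 : (2%:R : K) != 0 by rewrite (pcharf0P _).1.
apply/eqP; rewrite -(orFb (_ == 0)) -(negbTE two_neq0) -scaler_eq0 scaler_nat !mulrnDl.
rewrite (tp y z x) (tp z x y) (tp x y z) (brC x) (brC y) (brC z).
by rewrite (dotC y x) (dotC z y) (dotC x z) [_ - _ + _]addrC subrKA subrKA subrr.
Qed.

End LieTransposedPoisson.

Section Subadjacent.
Variables (K : fieldType) (V : lmodType K).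

Definition symmetrize (m : V -> V -> V) x y := m x y + m y x.
Definition antisymmetrize (m : V -> V -> V) x y := m x y - m y x.

Lemma symmetrize_bilinear m : bilin_op m -> bilin_op (symmetrize m).
Proof.
move=> hm; rewrite /symmetrize; split=> a x y z;
  by rewrite (bilinDl hm) (bilinDr hm) (bilinZl hm) (bilinZr hm) addrACA -scalerDr.
Qed.

Lemma antisymmetrize_bilinear m : bilin_op m -> bilin_op (antisymmetrize m).
Proof.
move=> hm; rewrite /antisymmetrize; split=> a x y z;
  by rewrite (bilinDl hm) (bilinDr hm) (bilinZl hm) (bilinZr hm) opprD addrACA -scalerBr.
Qed.

Lemma zinbielE star : bilin_op star ->
  zinbiel star <-> forall x y z, star (symmetrize star x y) z = star x (star y z).
Proof.
move=> hs; split=> [[_ zin] x y z | zin]; first by rewrite zin (bilinDl hs).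
by split=> // x y z; rewrite -(bilinDl hs) zin.
Qed.

Lemma pre_lieE circ : bilin_op circ -> pre_lie circ <->
  forall x y z, circ (antisymmetrize circ x y) z = circ x (circ y z) - circ y (circ x z).
Proof.
move=> hc; rewrite /antisymmetrize; split=> [[_ pl] x y z | pl].
  by apply/eqP; rewrite (bilinBl hc) -subr_eq0 subr_swap pl subrr.
by split=> // x y z; apply/eqP; rewrite -subr_eq0 subr_swap -(bilinBl hc) pl subrr.
Qed.

Lemma zinbiel_comm_assoc star : zinbiel star -> comm_assoc_alg (symmetrize star).
Proof.
move=> [hs zin]; split; first exact: symmetrize_bilinear.
split=> [x y|x y z]; first exact: addrC.
rewrite /symmetrize !(bilinDr hs) !zin -!(bilinDl hs).
by rewrite addrA (addrC (star z x)) (addrC (star z y)).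
Qed.

Lemma pre_lie_lie circ : pre_lie circ -> lie_alg (antisymmetrize circ).
Proof.
move=> [hc pl]; split; first exact: antisymmetrize_bilinear.
split=> [x|x y z]; first exact: subrr.
pose g a b c := circ a (circ b c) - circ b (circ c a).
have nested a b c : antisymmetrize circ a (antisymmetrize circ b c) = g a b c - g a c b.
  rewrite /antisymmetrize (bilinBr hc) (bilinBl hc).
  have := pl b c a; move/eqP; rewrite -subr_eq0 subr_swap subr_eq0 => /eqP ->.
  by rewrite subr_swap.
have cyclic a b c : g a b c + g b c a + g c a b = 0.
  by rewrite /g subrKA subrKA subrr.
rewrite !nested addrBBB (cyclic x y z) [g x z y + _ + _]addrAC (cyclic x z y).
exact: subrr.
Qed.

Lemma TZPD_transposed_poisson star circ : TZPD star circ ->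
  transposed_poisson (symmetrize star) (antisymmetrize circ).
Proof.
move=> [hzin [hpl [id1 [id2 id3]]]]; have [hs _] := hzin; have [hc _] := hpl.
split; first exact: zinbiel_comm_assoc.
split; first exact: pre_lie_lie.
set dot := symmetrize star; set br := antisymmetrize circ.
have star_circ a b c : star a (circ b c) = circ b (star a c) *+ 2 - circ (dot a b) c.
  by rewrite id1 addrC addKr.
have circ_dot a b c : circ (dot a b) c = circ b (star a c) *+ 2 - star a (circ b c).
  by rewrite id1 addrK.
have star_br a b c : star c (br a b) = circ a (dot b c) - circ b (dot a c).
  by rewrite -(opprB (circ b _)) (addr0_eq (id3 a b c)).
have dotC a b : dot a b = dot b a by exact: addrC.
have circ_dot_star a b c : circ a (dot b c) - circ a (star b c) = circ a (star c b).
  by rewrite /dot /symmetrize (bilinDr hc) addrAC subrr add0r.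
move=> x y z; transitivity ((circ x (star z y) - circ y (star z x)) *+ 2).
  rewrite [dot z _]/dot /symmetrize mulrnDl id2 !star_circ (dotC y x) star_br.
  rewrite opprB subrKA -mulrnBl -mulrnDl addr_subC circ_dot_star.
  by rewrite -(opprB (circ y _)) circ_dot_star.
rewrite /br /antisymmetrize addr_subC !circ_dot subr_swap -(bilinBr hs) star_br.
by rewrite (dotC z y) (dotC z x) subrK mulrnBl.
Qed.
End Subadjacent.

Section AdjointTZPD.
Variables (K : fieldType) (V : lmodType K).
Variables (dot br star circ : V -> V -> V) (B : V -> V -> K).
Hypotheses (hchar : [pchar K] =i pred0) (htp : transposed_poisson dot br).
Hypotheses (hB : bilin_form B) (hnd : nondeg_form B) (hskew : skew_form B).
Hypothesis dot_cocycle :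
  forall x y z, B (dot x y) z + B (dot y z) x + B (dot z x) y = 0.
Hypothesis br_cocycle :
  forall x y z, B (br x y) z + B (br y z) x + B (br z x) y = 0.
Hypothesis starE : forall x y z, B (star x y) z = B y (dot x z).
Hypothesis circE : forall x y z, B (circ x y) z = - B y (br x z).

Let hBm := bilin_form_map hB.
Let hdot : bilin_op dot := htp.1.1.
Let dotC : forall x y, dot x y = dot y x := htp.1.2.1.
Let dotA : forall x y z, dot (dot x y) z = dot x (dot y z) := htp.1.2.2.
Let hlie : lie_alg br := htp.2.1.
Let hbr : bilin_op br := hlie.1.
Let tp : forall x y z, dot z (br x y) *+ 2 = br (dot z x) y + br x (dot z y) :=
  htp.2.2.
Let brC := lie_alg_anticomm hlie.

Local Ltac expand := rewrite ?(mulr2n, bilinDl hBm, bilinDr hBm, bilinBl hBm,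
  bilinBr hBm, bilinNl hBm, bilinNr hBm, bilin_formZl hB, bilin_formZr hB,
  bilinDl hdot, bilinDr hdot, bilinBl hdot, bilinBr hdot, bilinZl hdot,
  bilinZr hdot, bilinNl hdot, bilinNr hdot, bilinDl hbr, bilinDr hbr,
  bilinBl hbr, bilinBr hbr, bilinZl hbr, bilinZr hbr, bilinNl hbr, bilinNr hbr).

Lemma form_inj u v : (forall w, B u w = B v w) -> u = v.
Proof.
move=> h; apply/eqP; rewrite -subr_eq0; apply/eqP/hnd => w.
by rewrite (bilinBl hBm) h subrr.
Qed.

Lemma dot_adjoint x y z : B (dot x y) z = B x (dot y z) + B y (dot x z).
Proof.
by rewrite -[LHS]subr0 -(dot_cocycle x y z) (dotC z x) !(hskew _ (dot _ _)); ring.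
Qed.

Lemma br_adjoint x y z : B (br x y) z = B x (br y z) - B y (br x z).
Proof.
rewrite -[LHS]subr0 -(br_cocycle x y z) (brC z x) !(hskew _ (br _ _)).
by rewrite ?(bilinNl hBm, bilinNr hBm); ring.
Qed.

Lemma star_bilinear : bilin_op star.
Proof. by split=> a x y z; apply: form_inj => w; expand; rewrite !starE; expand. Qed.

Lemma circ_bilinear : bilin_op circ.
Proof. by split=> a x y z; apply: form_inj => w; expand; rewrite !circE; expand; ring. Qed.

Lemma star_sym x y : star x y + star y x = dot x y.
Proof.
by apply: form_inj => w; rewrite (bilinDl hBm) !starE (dot_adjoint x y w) addrC.
Qed.

Lemma circ_anti x y : circ x y - circ y x = br x y.
Proof.
apply: form_inj => w; rewrite (bilinBl hBm) !circE (br_adjoint x y w).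
by rewrite !(hskew _ (br _ _)); ring.
Qed.

Lemma star_zinbiel : zinbiel star.
Proof.
apply/(zinbielE star_bilinear) => x y z; rewrite /symmetrize star_sym.
by apply: form_inj => w; rewrite !starE -dotA (dotC y x).
Qed.

Lemma circ_pre_lie : pre_lie circ.
Proof.
apply/(pre_lieE circ_bilinear) => x y z; rewrite /antisymmetrize circ_anti.
apply: form_inj => w; rewrite (bilinBl hBm) !circE.
by rewrite (lie_alg_leibniz hlie); expand; ring.
Qed.

Lemma circ_star_compat x y z :
  circ y (star x z) *+ 2 = circ (star x y + star y x) z + star x (circ y z).
Proof.
rewrite star_sym; apply: form_inj => w; expand; rewrite !circE !starE circE.
have := congr1 (B z) (tp y w x); expand => tpB.
by rewrite -opprD tpB opprD.
Qed.

Lemma star_circ_compat x y z :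
  star (circ x y - circ y x) z *+ 2 = star x (circ y z) - star y (circ x z).
Proof.
rewrite circ_anti; apply: form_inj => w; expand; rewrite !starE !circE.
rewrite (dotC (br x y)) (dotC x w) (dotC y w).
have := congr1 (B z) (tp x y w); rewrite (brC (dot w x)); expand => tpB.
by rewrite tpB; ring.
Qed.

Lemma br_dot_r x y z : br x (dot z y) = dot z (br x y) *+ 2 - br (dot z x) y.
Proof. by rewrite tp addrC addKr. Qed.

Lemma br_dot_l x y z : br (dot z x) y = dot z (br x y) *+ 2 - br x (dot z y).
Proof. by rewrite tp addrK. Qed.

Lemma dot_br_cyclic x y z : dot z (br x y) = - dot x (br y z) - dot y (br z x).
Proof. by rewrite -opprD (addr0_eq (transposed_poisson_cyclic hchar htp x y z)). Qed.

Lemma dot_br_cocycle x y z w :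
  B (dot x z) (br y w) - B (dot y z) (br x w) - B (br x y) (dot z w) = 0.
Proof.
(* key reads f + 2 f = 0: in the second copy of f the factors are written in
   swapped order, so that the adjoint rules expand the two copies differently. *)
have key : B (dot x z) (br y w) - B (dot y z) (br x w) - B (br x y) (dot z w)
  + (B (dot z x) (br y w) - B (dot z y) (br x w) + B (dot z w) (br x y)) *+ 2 = 0.
  rewrite !dot_adjoint br_adjoint (dot_br_cyclic x y w) !br_dot_r.
  expand; rewrite (hskew x (br _ _)) (hskew y (br _ _)) !br_adjoint !dot_adjoint.
  rewrite (brC (dot z y) x) br_dot_l !(brC w); expand.
  by ring.
rewrite (dotC z x) (dotC z y) (hskew (dot z w)) -mulrS in key.
move/eqP: key; rewrite -mulr_natr mulf_eq0 (pcharf0P _).1 // orbF.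
by move/eqP.
Qed.

Lemma circ_star_cyclic x y z :
  circ y (star x z + star z x) - circ x (star y z + star z y)
  + star z (circ x y - circ y x) = 0.
Proof.
rewrite !star_sym circ_anti; apply: form_inj => w.
rewrite (bilin0l hBm); expand; rewrite !circE starE -[RHS]oppr0.
by rewrite -(dot_br_cocycle x y z w); ring.
Qed.

Lemma adjoint_TZPD : TZPD star circ.
Proof.
split; first exact: star_zinbiel.
split; first exact: circ_pre_lie.
split; first exact: circ_star_compat.
by split; [exact: star_circ_compat | exact: circ_star_cyclic].
Qed.

End AdjointTZPD.

Section Pairing.
Variables (K : fieldType) (n : nat).
Local Notation V := 'rV[K]_n.

Lemma pairing_bilinear : bilin_form (@pairing K n).
Proof.
rewrite /pairing; split=> a x y z;
  by rewrite mulr_sumr -big_split; apply: eq_bigr => i _ /=; rewrite !mxE; ring.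
Qed.

Let hP := bilin_form_map pairing_bilinear.

Lemma pairingC (a u : V) : pairing a u = pairing u a.
Proof. by apply: eq_bigr => i _; rewrite mulrC. Qed.

Lemma pairing_delta (a : V) j : pairing a (delta_mx 0 j) = a 0 j.
Proof.
rewrite /pairing (bigD1 j) //= big1 ?addr0 => [|i /negPf neq_ij].
  by rewrite mxE !eqxx mulr1.
by rewrite mxE neq_ij andbF mulr0.
Qed.

Lemma pairing_injl (a b : V) : (forall u, pairing a u = pairing b u) -> a = b.
Proof. by move=> h; apply/rowP => j; rewrite -!pairing_delta. Qed.

Lemma pairing_injr (u v : V) : (forall a, pairing a u = pairing a v) -> u = v.
Proof. by move=> h; apply: pairing_injl => a; rewrite pairingC h pairingC. Qed.

Lemma linear_row_expansion (f : V -> K) :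
  (forall c u v, f (c *: u + v) = c * f u + f v) ->
  forall u, f u = \sum_j u 0 j * f (delta_mx 0 j).
Proof.
move=> hf u; have f0 : f 0 = 0.
  have := hf 1 0 0; rewrite scale1r addr0 mul1r => f00.
  by apply: (addrI (f 0)); rewrite addr0 -f00.
rewrite {1}(row_sum_delta u); elim/big_rec2: _ => [//|j s t _ <-].
by rewrite hf.
Qed.

Lemma pairing_dual_rep (rho : V -> V -> V) : bilin_op rho ->
  forall x a u, pairing (dual_rep rho x a) u = - pairing a (rho x u).
Proof.
move=> hrho x a u.
rewrite (@linear_row_expansion (fun v => pairing a (rho x v))); last first.
  by move=> c v w; rewrite (bilinDr hrho) (bilinZr hrho) (bilinDr hP) (bilinZr hP).
rewrite /pairing /dual_rep -sumrN; apply: eq_bigr => j _.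
by rewrite mxE mulrC mulrN.
Qed.

Lemma dual_rep_bilinear (rho : V -> V -> V) : bilin_op rho -> bilin_op (dual_rep rho).
Proof.
move=> hrho; split=> c x y z; apply: pairing_injl => u;
  rewrite ?(bilinDl hP, bilin_formZl pairing_bilinear, pairing_dual_rep hrho,
    bilinDl hrho, bilinZl hrho, bilinDr hrho, bilinZr hrho, bilinDr hP,
    bilin_formZr pairing_bilinear); ring.
Qed.

Lemma Bp_bilinear : bilin_form (@Bp K n).
Proof.
rewrite /Bp; split=> c [x a] [y b] [z d] /=;
  by rewrite ?(bilinDl hP, bilinDr hP, bilin_formZl pairing_bilinear,
    bilin_formZr pairing_bilinear); ring.
Qed.

Lemma Bp_skew : skew_form (@Bp K n).
Proof. by move=> [x a] [y b]; rewrite /Bp /=; ring. Qed.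

Lemma Bp_nondeg : nondeg_form (@Bp K n).
Proof.
move=> [x a] Bp0; apply: injective_projections => /=.
  apply: pairing_injr => b; have := Bp0 (0, b).
  by rewrite /Bp /= !(bilin0r hP) subr0.
apply: pairing_injl => u; have := Bp0 (u, 0).
by rewrite /Bp /= !(bilin0l hP) sub0r => /eqP; rewrite oppr_eq0 => /eqP.
Qed.

End Pairing.

Section SemidirectProduct.
Variables (K : fieldType) (n : nat).
Local Notation V := 'rV[K]_n.
Variables (dot br mu rho : V -> V -> V).
Hypotheses (hmu : bilin_op mu) (hrho : bilin_op rho).

Local Ltac expand := rewrite ?(mulrnDl, mulrnBl, mulNrn, bilinDl hmu,
  bilinDr hmu, bilinBl hmu, bilinBr hmu, bilinNl hmu, bilinNr hmu, bilinZl hmu, bilinZr hmu,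
  bilinDl hrho, bilinDr hrho, bilinBl hrho, bilinBr hrho,
  bilinNl hrho, bilinNr hrho, bilinZl hrho, bilinZr hrho).
Local Ltac row_ring := apply/rowP => j; rewrite !mxE; ring.

Lemma sd_prod_mul_comm_assoc : comm_assoc_alg dot ->
  (forall x y a, mu (dot x y) a = mu x (mu y a)) ->
  comm_assoc_alg (sd_prod_mul dot mu).
Proof.
move=> [hdot [dotC dotA]] mu_dot.
have mu_comm x y a : mu x (mu y a) = mu y (mu x a) by rewrite -!mu_dot dotC.
rewrite /sd_prod_mul; split; [split|split].
- move=> c [x a] [y b] [z d]; apply: injective_projections => /=.
    exact: hdot.1.
  by expand; row_ring.
- move=> c [x a] [y b] [z d]; apply: injective_projections => /=.
    exact: hdot.2.
  by expand; row_ring.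
- by move=> [x a] [y b]; rewrite dotC addrC.
move=> [x a] [y b] [z d]; apply: injective_projections => /=; first exact: dotA.
by expand; rewrite !mu_dot (mu_comm z x) (mu_comm z y); row_ring.
Qed.

Lemma sd_prod_br_lie : lie_alg br ->
  (forall x y a, rho (br x y) a = rho x (rho y a) - rho y (rho x a)) ->
  lie_alg (sd_prod_br br rho).
Proof.
move=> [hbr [br_xx jacobi]] rho_br; rewrite /sd_prod_br; split; [split|split].
- move=> c [x a] [y b] [z d]; apply: injective_projections => /=.
    exact: hbr.1.
  by expand; row_ring.
- move=> c [x a] [y b] [z d]; apply: injective_projections => /=.
    exact: hbr.2.
  by expand; row_ring.
- by move=> [x a]; apply: injective_projections; rewrite /= ?br_xx ?subrr.
move=> [x a] [y b] [z d]; apply: injective_projections => /=; first exact: jacobi.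
by rewrite !rho_br; expand; row_ring.
Qed.

Lemma sd_prod_transposed_poisson : transposed_poisson dot br ->
  (forall x y a, mu (dot x y) a = mu x (mu y a)) ->
  (forall x y a, rho (br x y) a = rho x (rho y a) - rho y (rho x a)) ->
  (forall x z a, mu z (rho x a) *+ 2 = rho (dot z x) a + rho x (mu z a)) ->
  (forall x y a, mu (br x y) a *+ 2 = rho x (mu y a) - rho y (mu x a)) ->
  transposed_poisson (sd_prod_mul dot mu) (sd_prod_br br rho).
Proof.
move=> [hca [hlie tp]] mu_dot rho_br mu_rho mu_br.
split; first exact: sd_prod_mul_comm_assoc.
split; first exact: sd_prod_br_lie.
rewrite /sd_prod_mul /sd_prod_br => [[x a] [y b] [z d]].
apply: injective_projections => /=; first exact: tp.
by rewrite -mulr2n; expand; rewrite !mu_rho mu_br; expand; row_ring.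
Qed.

End SemidirectProduct.

Section DualSemidirect.
Variables (K : fieldType) (n : nat).
Local Notation V := 'rV[K]_n.
Variables (star circ : V -> V -> V).
Hypotheses (hs : bilin_op star) (hc : bilin_op circ).

Local Notation mu := (fun x a => - dual_rep star x a).
Local Notation rho := (dual_rep circ).
Local Notation dot := (symmetrize star).
Local Notation br := (antisymmetrize circ).

Let hP := bilin_form_map (@pairing_bilinear K n).

Lemma pairing_dual_star x a u : pairing (mu x a) u = pairing a (star x u).
Proof. by rewrite (bilinNl hP) (pairing_dual_rep hs) opprK. Qed.

Local Ltac expand := rewrite ?(mulr2n, bilinDl hP, bilinDr hP, bilinBl hP,
  bilinBr hP, bilinNl hP, bilinNr hP, pairing_dual_star, pairing_dual_rep hc,
  bilinDl hs, bilinDr hs, bilinBl hs, bilinBr hs,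
  bilinDl hc, bilinDr hc, bilinBl hc, bilinBr hc, opprK).

Lemma dual_star_dot : zinbiel star -> forall x y a, mu (dot x y) a = mu x (mu y a).
Proof.
move=> /(zinbielE hs) zin x y a; apply: pairing_injl => u; expand.
by rewrite -(bilinDr hP) -(bilinDl hs) addrC zin.
Qed.

Lemma dual_circ_br : pre_lie circ ->
  forall x y a, rho (br x y) a = rho x (rho y a) - rho y (rho x a).
Proof.
move=> /(pre_lieE hc) pl x y a; apply: pairing_injl => u.
by rewrite [LHS](pairing_dual_rep hc) pl; expand; ring.
Qed.

Lemma dual_star_circ : TZPD star circ ->
  forall x z a, mu z (rho x a) *+ 2 = rho (dot z x) a + rho x (mu z a).
Proof.
move=> [_ [_ [id1 _]]] x z a; apply: pairing_injl => u.
rewrite (bilinMnl hP) pairing_dual_star (pairing_dual_rep hc) mulNrn.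
rewrite -(bilinMnr hP) id1.
by expand; ring.
Qed.

Lemma dual_star_br : TZPD star circ ->
  forall x y a, mu (br x y) a *+ 2 = rho x (mu y a) - rho y (mu x a).
Proof.
move=> [_ [_ [_ [id2 _]]]] x y a; apply: pairing_injl => u.
rewrite (bilinMnl hP) pairing_dual_star -(bilinMnr hP) id2.
by expand; ring.
Qed.

Lemma Bp_connes_cocycle : connes_cocycle (sd_prod_mul dot mu) (@Bp K n).
Proof.
split; first exact: Bp_bilinear.
split; first exact: Bp_skew.
by move=> [x a] [y b] [z d]; rewrite /Bp /=; expand; ring.
Qed.

Lemma Bp_symplectic : symplectic_form (sd_prod_br br rho) (@Bp K n).
Proof.
split; first exact: Bp_bilinear.
split; first exact: Bp_nondeg.
split; first exact: Bp_skew.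
by move=> [x a] [y b] [z d]; rewrite /Bp /=; expand; ring.
Qed.

End DualSemidirect.

Lemma TZPD_semidirect (K : fieldType) (n : nat)
    (star circ : 'rV[K]_n -> 'rV[K]_n -> 'rV[K]_n) :
  TZPD star circ ->
  let P := sd_prod_mul (symmetrize star) (fun x a => - dual_rep star x a) in
  let Q := sd_prod_br (antisymmetrize circ) (dual_rep circ) in
  transposed_poisson P Q /\ connes_cocycle P (@Bp K n) /\ symplectic_form Q (@Bp K n).
Proof.
move=> htzpd; have [hzin [hpl _]] := htzpd; have [hs _] := hzin; have [hc _] := hpl.
split; last by split; [exact: Bp_connes_cocycle | exact: Bp_symplectic].
apply: sd_prod_transposed_poisson.
- exact: bilin_opN (dual_rep_bilinear hs).
- exact: dual_rep_bilinear.
- exact: TZPD_transposed_poisson.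
- exact: dual_star_dot.
- exact: dual_circ_br.
- exact: dual_star_circ.
- exact: dual_star_br.
Qed.

Unset Implicit Arguments. Set Strict Implicit.

Theorem mainTheorem19 (K : fieldType) (n : nat)
  (hchar : [pchar K] =i pred0) :
  (forall (dot br : 'rV[K]_n -> 'rV[K]_n -> 'rV[K]_n)
          (B : 'rV[K]_n -> 'rV[K]_n -> K)
          (star circ : 'rV[K]_n -> 'rV[K]_n -> 'rV[K]_n),
     transposed_poisson dot br ->
     bilin_form B -> nondeg_form B -> skew_form B ->
     connes_cocycle dot B -> symplectic_form br B ->
     (forall x y z, B (star x y) z = B y (dot x z)) ->
     (forall x y z, B (circ x y) z = - B y (br x z)) ->
     TZPD star circ /\
     (forall x y, star x y + star y x = dot x y) /\
     (forall x y, circ x y - circ y x = br x y)) /\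
  (forall (star circ : 'rV[K]_n -> 'rV[K]_n -> 'rV[K]_n),
     TZPD star circ ->
     let dot := fun x y => star x y + star y x in
     let br := fun x y => circ x y - circ y x in
     let P := sd_prod_mul dot (fun x a => - dual_rep star x a) in
     let Q := sd_prod_br br (dual_rep circ) in
     transposed_poisson P Q /\
     connes_cocycle P (@Bp K n) /\ symplectic_form Q (@Bp K n)).
Proof.
split; last exact: TZPD_semidirect.
move=> dot br B star circ htp hB hnd hskew [_ [_ dot_cocycle]] [_ [_ [_ br_cocycle]]].
move=> starE circE.
split; first exact: (adjoint_TZPD hchar htp hB hnd hskew dot_cocycle br_cocycle starE circE).
split; first exact: (star_sym htp hB hnd hskew dot_cocycle starE).
exact: (circ_anti htp hB hnd hskew br_cocycle circE).
Qed.
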